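(* There is no SSP group of $G(4,2)$-type. Consequently, if $G$ is a non-abelian SSP group of length $4$ with canonical basis $(a_1,\dots,a_4)$, then $\langle a_1,a_2,a_3\rangle$ is abelian and the cut-off point of $G$ is $3$.
   Context: Notation: $x^f$ is the image of $x$ under $f$; $[x,y]=x^{-1}y^{-1}xy$; $e$ is the identity. A triple $(G,H,f)$, where $H\le G$ and $f:H\to G$ is a homomorphism, is simple if the only subgroup $K\le H$ that is normal in $G$ and satisfies $K^f\le K$ is trivial. For such a triple put $G_0=G$, $H_0=H$, and for $k\ge1$, $G_k=(H_{k-1})^f$, $H_k=H\cap G_k$. Let $p$ be a prime or $\infty$. A polycyclic group $G$ is an SSP group with respect to $(G,H,f)$ if: (1) $f$ is injective; (2) each $(G_k,H_k,f|_{H_k})$ is a simple triple; (3) $H_k$ and $G_{k+1}$ are normal in $G_k$ and $G_k=H_kG_{k+1}$; (4) whenever $G_k$ is nontrivial, $G_k/H_k$ is cyclic of order $p$ (infinite cyclic if $p=\infty$). The length $n$ is the Hirsch length if $p=\infty$ and $\log_p|G|$ if $p$ is prime. A canonical basis of $G$ is a tuple $(a_1,\dots,a_n)$ with $a_1,\dots,a_{n-1}\in H$, $a_{i+1}=a_i^f$ for $1\le i\le n-1$, $G_i=\langle a_{i+1},\dots,a_n\rangle$ and $H_i=\langle a_{i+1},\dots,a_{n-1}\rangle$ for $0\le i\le n-1$. The cut-off point $c$ is the largest $s\in\{2,\dots,n\}$ with $[a_1,a_2]=\dots=[a_1,a_s]=e$; $G$ is then of $G(n,c)$-type. *)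

(* Abstract (possibly infinite) groups, since SSP groups with
   p = infinity are infinite polycyclic groups, which MathComp's finGroupType
   cannot represent. *)
From Stdlib Require Import ZArith List.

Set Implicit Arguments.
Unset Strict Implicit.

Record groupType := GroupType {
  gcar :> Type;
  gmul : gcar -> gcar -> gcar;
  ginv : gcar -> gcar;
  gone : gcar;
  gmulA : forall x y z, gmul x (gmul y z) = gmul (gmul x y) z;
  gmul1g : forall x, gmul gone x = x;
  gmulg1 : forall x, gmul x gone = x;
  gmulVg : forall x, gmul (ginv x) x = gone;
  gmulgV : forall x, gmul x (ginv x) = gone
}.

Section GroupDefs.
Variable G : groupType.
Local Notation "x * y" := (gmul x y).
Local Notation e := (gone G).

Fixpoint gpow (g : G) (n : nat) : G :=
  match n with 0 => e | S n => g * gpow g n end.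

Definition gpowz (g : G) (z : Z) : G :=
  match z with
  | Z0 => e
  | Zpos q => gpow g (Pos.to_nat q)
  | Zneg q => ginv (gpow g (Pos.to_nat q))
  end.

Definition gcomm (x y : G) : G := ginv x * (ginv y * (x * y)).

Definition subgroup (K : G -> Prop) : Prop :=
  K e /\ (forall x y, K x -> K y -> K (x * y)) /\ (forall x, K x -> K (ginv x)).

Definition subset (K L : G -> Prop) : Prop := forall x, K x -> L x.

Definition normal (K L : G -> Prop) : Prop :=
  subgroup K /\ subset K L /\
  forall x k, L x -> K k -> K (ginv x * (k * x)).

Definition trivial (K : G -> Prop) : Prop := forall x, K x -> x = e.

Definition gen (S : G -> Prop) (x : G) : Prop :=
  forall K, subgroup K -> subset S K -> K x.

Definition abelian (K : G -> Prop) : Prop :=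
  forall x y, K x -> K y -> x * y = y * x.

(* L / K is cyclic (K normal in L): generated by the coset of some g in L *)
Definition cyclic_factor (L K : G -> Prop) (g : G) : Prop :=
  L g /\ forall x, L x -> exists z : Z, K (gpowz g (- z) * x).

Definition cyclic_series (Ser : nat -> G -> Prop) (m : nat) : Prop :=
  (forall x, Ser 0 x) /\ trivial (Ser m) /\
  forall i, i < m ->
    subgroup (Ser i) /\ normal (Ser (S i)) (Ser i) /\
    exists g, cyclic_factor (Ser i) (Ser (S i)) g.

Definition polycyclic : Prop := exists Ser m, cyclic_series Ser m.

(* Hirsch length: number of infinite cyclic factors of a polycyclic series
   (the flags b record which factors are infinite) *)
Definition hirsch_length (n : nat) : Prop :=
  exists Ser m (b : list bool),
    cyclic_series Ser m /\ length b = m /\ count_occ Bool.bool_dec b true = n /\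
    forall i, i < m ->
      if nth i b false
      then exists g, cyclic_factor (Ser i) (Ser (S i)) g /\
                     forall z, Ser (S i) (gpowz g z) -> z = 0%Z
      else exists g (k : nat), cyclic_factor (Ser i) (Ser (S i)) g /\
                     0 < k /\ Ser (S i) (gpow g k).

Definition has_order (N : nat) : Prop :=
  exists l : list G, NoDup l /\ (forall x, In x l) /\ length l = N.

(* p : option nat ; Some q stands for the prime q, None stands for infinity *)
Definition valid_p (p : option nat) : Prop :=
  match p with
  | Some q => 2 <= q /\ forall d, 2 <= d -> (exists k, q = Nat.mul d k) -> d = q
  | None => True
  end.

Definition quotient_cyclic_of_order (L K : G -> Prop) (p : option nat) : Prop :=
  exists g, cyclic_factor L K g /\
    forall z : Z, K (gpowz g z) <->
      match p with
      | Some q => Z.divide (Z.of_nat q) z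
      | None => z = 0%Z
      end.

Variables (H : G -> Prop) (f : G -> G).

Fixpoint Gk (k : nat) : G -> Prop :=
  match k with
  | 0 => fun _ => True
  | S k => fun y => exists x, H x /\ Gk k x /\ f x = y
  end.

Definition Hk (k : nat) (x : G) : Prop := H x /\ Gk k x.

Definition simple_triple (L K : G -> Prop) : Prop :=
  forall N, subgroup N -> subset N K -> normal N L ->
    (forall x, N x -> N (f x)) -> trivial N.

Definition SSP (p : option nat) : Prop :=
  polycyclic /\ subgroup H /\
  (forall x y, H x -> H y -> f (x * y) = f x * f y) /\
  (forall x y, H x -> H y -> f x = f y -> x = y) /\
  (forall k, simple_triple (Gk k) (Hk k)) /\
  (forall k, normal (Hk k) (Gk k) /\ normal (Gk (S k)) (Gk k) /\
               forall x, Gk k x <->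
                 exists h g, Hk k h /\ Gk (S k) g /\ x = h * g) /\
  (forall k, (exists x, Gk k x /\ x <> e) ->
               quotient_cyclic_of_order (Gk k) (Hk k) p).

Definition ssp_length (p : option nat) (n : nat) : Prop :=
  match p with
  | Some q => has_order (Nat.pow q n)
  | None => hirsch_length n
  end.

Definition canonical_basis (n : nat) (a : nat -> G) : Prop :=
  (forall i, 1 <= i <= n - 1 -> H (a i)) /\
  (forall i, 1 <= i <= n - 1 -> a (S i) = f (a i)) /\
  (forall i, i <= n - 1 ->
     forall x, Gk i x <-> gen (fun y => exists j, S i <= j <= n /\ y = a j) x) /\
  (forall i, i <= n - 1 ->
     forall x, Hk i x <-> gen (fun y => exists j, S i <= j <= n - 1 /\ y = a j) x).

End GroupDefs.

Definition cutoff (G : groupType) (n : nat) (a : nat -> G) (c : nat) : Prop :=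
  2 <= c <= n /\
  (forall j, 2 <= j <= c -> gcomm (a 1) (a j) = gone G) /\
  (forall s, c < s <= n -> ~ (forall j, 2 <= j <= s -> gcomm (a 1) (a j) = gone G)).

From Stdlib Require Import ZArith List.
From Stdlib Require Import Lia Znumtheory Classical.
Local Open Scope nat_scope.

(* Write x = [a1,a3] and y = [a2,a4].  As H_(k+1) = H ∩ G_(k+1) contains
   [H_k, G_(k+1)] and H_3 is trivial, [a3,a4] = e; pulling back along the
   injective f gives [a2,a3] = [a1,a2] = e.  Likewise y lies in H_2 = <a3>, say
   y = a3^m, and then x = a2^m since f x = y.  Conjugating the commuting pair
   a3, a4 by a1, and using that H_1 = <a2,a3> is abelian and a3 is central in
   G_1, shows that x commutes with a4; conjugating x = a2^m by a4 then yields
   a3^(m^2) = e, hence a4^(m^2) = e.  As G_3 = <a4> is cyclic of prime or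
   infinite order, a4^m = e, and pulling back, a3^m = a2^m = e, i.e. x = y = e.
   So all the a_i commute except possibly a1 and a4: the cut-off point is at
   least 3, and it is 4 only if G is abelian. *)

Section GroupFacts.
Context {G : groupType}.
Local Notation "x * y" := (gmul x y).
Local Notation e := (gone G).
Implicit Types x y z g : G.

Lemma mulKg x y : ginv x * (x * y) = y.
Proof. rewrite gmulA, gmulVg, gmul1g. reflexivity. Qed.

Lemma mulKVg x y : x * (ginv x * y) = y.
Proof. rewrite gmulA, gmulgV, gmul1g. reflexivity. Qed.

Lemma mulgI x y z : x * y = x * z -> y = z.
Proof. intro Exyz. rewrite <- (mulKg x y), <- (mulKg x z), Exyz. reflexivity. Qed.

Lemma invg_unique x y : x * y = e -> y = ginv x.
Proof. intro Exy. apply (mulgI x). rewrite Exy, gmulgV. reflexivity. Qed.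

Lemma invgM x y : ginv (x * y) = ginv y * ginv x.
Proof.
  symmetry. apply invg_unique.
  rewrite <- gmulA, (gmulA y), gmulgV, gmul1g, gmulgV. reflexivity.
Qed.

Lemma invgK x : ginv (ginv x) = x.
Proof. symmetry. apply invg_unique, gmulVg. Qed.

Lemma invg1 : ginv e = e.
Proof. symmetry. apply invg_unique, gmul1g. Qed.

End GroupFacts.

Ltac gsimpl := repeat first
  [ rewrite invgM | rewrite invgK | rewrite invg1 | rewrite <- gmulA
  | rewrite mulKg | rewrite mulKVg | rewrite gmulVg | rewrite gmulgV
  | rewrite gmul1g | rewrite gmulg1 ].

Section Commutation.
Context {G : groupType}.
Local Notation "x * y" := (gmul x y).
Local Notation e := (gone G).
Implicit Types x y z g : G.

Definition commute x y : Prop := x * y = y * x.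

Definition gconj x g : G := ginv g * (x * g).

Lemma commute_sym x y : commute x y -> commute y x.
Proof. unfold commute. auto. Qed.

Lemma gcomm_eq1 x y : gcomm x y = e <-> commute x y.
Proof.
  unfold gcomm, commute. split; intro Exy.
  - rewrite <- (gmulg1 (y * x)), <- Exy. gsimpl. reflexivity.
  - rewrite Exy. gsimpl. reflexivity.
Qed.

Lemma invg_gcomm x y : ginv (gcomm x y) = gcomm y x.
Proof. unfold gcomm. gsimpl. reflexivity. Qed.

Lemma gconj_gcomm x g : gconj x g = x * gcomm x g.
Proof. unfold gconj, gcomm. gsimpl. reflexivity. Qed.

Lemma gconj_id x g : commute x g -> gconj x g = x.
Proof. unfold gconj. intros ->. gsimpl. reflexivity. Qed.

Lemma gconjM x y g : gconj (x * y) g = gconj x g * gconj y g.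
Proof. unfold gconj. gsimpl. reflexivity. Qed.

Lemma commute_gconj x y g : commute x y -> commute (gconj x g) (gconj y g).
Proof. unfold commute. rewrite <- !gconjM. intros ->. reflexivity. Qed.

Lemma subgroup_one {K : G -> Prop} : subgroup K -> K e.
Proof. intros (? & _). assumption. Qed.

Lemma subgroup_mul {K : G -> Prop} {x y} : subgroup K -> K x -> K y -> K (x * y).
Proof. intros (_ & KM & _). apply KM. Qed.

Lemma subgroup_inv {K : G -> Prop} {x} : subgroup K -> K x -> K (ginv x).
Proof. intros (_ & _ & KV). apply KV. Qed.

Lemma subgroup_gcomm (K : G -> Prop) x y : subgroup K -> K x -> K y -> K (gcomm x y).
Proof.
  intros HK Kx Ky. unfold gcomm.
  repeat apply subgroup_mul; auto; apply subgroup_inv; auto.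
Qed.

Lemma subgroup_all : subgroup (fun _ : G => True).
Proof. repeat split. Qed.

Lemma subgroup_eq1 : subgroup (fun u : G => u = e).
Proof. split; [|split]; intros; subst; gsimpl; reflexivity. Qed.

Lemma subgroup_commute x : subgroup (commute x).
Proof.
  unfold commute. split; [|split].
  - rewrite gmulg1, gmul1g. reflexivity.
  - intros y z Cy Cz. rewrite gmulA, Cy, <- gmulA, Cz, gmulA. reflexivity.
  - intros y Cy. apply (mulgI y). rewrite gmulA, <- Cy. gsimpl. reflexivity.
Qed.

Lemma gcomm_normal_l (N L : G -> Prop) x y :
  normal N L -> N x -> L y -> N (gcomm x y).
Proof.
  intros (HN & _ & NJ) Nx Ly. unfold gcomm.
  apply subgroup_mul; auto. apply subgroup_inv; auto.
Qed.

Lemma gcomm_normal_r (N L : G -> Prop) x y :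
  normal N L -> L x -> N y -> N (gcomm x y).
Proof.
  intros (HN & _ & NJ) Lx Ny.
  replace (gcomm x y) with (ginv x * (ginv y * x) * y) by (unfold gcomm; gsimpl; reflexivity).
  apply subgroup_mul; auto. apply NJ; auto. apply subgroup_inv; auto.
Qed.

Lemma gen_in (S : G -> Prop) x : S x -> gen S x.
Proof. intros Sx K _ SK. apply SK, Sx. Qed.

Lemma gen_min (S K : G -> Prop) :
  subgroup K -> (forall x, S x -> K x) -> forall x, gen S x -> K x.
Proof. intros HK SK x Sx. apply Sx; assumption. Qed.

Lemma gen_commute (S : G -> Prop) c x :
  (forall s, S s -> commute c s) -> gen S x -> commute c x.
Proof. intros Sc. apply gen_min; [apply subgroup_commute | exact Sc]. Qed.

Lemma abelian_gen (S : G -> Prop) :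
  (forall x y, S x -> S y -> commute x y) -> abelian (gen S).
Proof.
  intros CS x y Sx Sy.
  apply (gen_commute S); [|exact Sy].
  intros s Ss. apply commute_sym, (gen_commute S); [|exact Sx].
  intros t St. apply CS; assumption.
Qed.

End Commutation.

Section IntegerPowers.
Context {G : groupType}.
Local Notation "x * y" := (gmul x y).
Local Notation e := (gone G).
Implicit Types x y g : G.

Lemma gpowz_of_nat g n : gpowz g (Z.of_nat n) = gpow g n.
Proof. destruct n; [reflexivity|]. simpl. rewrite SuccNat2Pos.id_succ. reflexivity. Qed.

Lemma gpowz_opp_of_nat g n : gpowz g (- Z.of_nat n) = ginv (gpow g n).
Proof. destruct n; simpl; [rewrite invg1 | rewrite SuccNat2Pos.id_succ]; reflexivity. Qed.

Lemma gpow_commute g n : g * gpow g n = gpow g n * g.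
Proof.
  induction n as [|n IHn]; simpl; [rewrite gmulg1, gmul1g; reflexivity|].
  rewrite <- gmulA, <- IHn. reflexivity.
Qed.

Lemma gpowz_succ g z : gpowz g (Z.succ z) = gpowz g z * g.
Proof.
  destruct (Z.le_gt_cases 0 z) as [z_ge0 | z_lt0].
  - rewrite <- (Z2Nat.id z z_ge0), <- Nat2Z.inj_succ, !gpowz_of_nat.
    apply gpow_commute.
  - replace z with (- Z.of_nat (S (Z.to_nat (- z - 1))))%Z by lia.
    replace (Z.succ _) with (- Z.of_nat (Z.to_nat (- z - 1)))%Z by lia.
    rewrite !gpowz_opp_of_nat. simpl. gsimpl. reflexivity.
Qed.

Lemma gpowz_pred g z : gpowz g (Z.pred z) = gpowz g z * ginv g.
Proof. rewrite <- (Z.succ_pred z) at 2. rewrite gpowz_succ. gsimpl. reflexivity. Qed.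

Lemma gpowz1 g : gpowz g 1 = g.
Proof. apply gmulg1. Qed.

Lemma gpowz1n z : gpowz e z = e.
Proof.
  induction z as [|z IHz|z IHz] using Z.peano_ind; [reflexivity| |].
  - rewrite gpowz_succ, IHz, gmulg1. reflexivity.
  - rewrite gpowz_pred, IHz, invg1, gmulg1. reflexivity.
Qed.

Lemma gpowz_in (K : G -> Prop) g z : subgroup K -> K g -> K (gpowz g z).
Proof.
  intros HK Kg.
  induction z as [|z IHz|z IHz] using Z.peano_ind; [exact (subgroup_one HK)| |].
  - rewrite gpowz_succ. apply subgroup_mul; assumption.
  - rewrite gpowz_pred. apply subgroup_mul; auto. apply subgroup_inv; assumption.
Qed.

Lemma gpowz_add g z w : gpowz g (z + w) = gpowz g z * gpowz g w.
Proof.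
  induction w as [|w IHw|w IHw] using Z.peano_ind.
  - rewrite Z.add_0_r, gmulg1. reflexivity.
  - rewrite Z.add_succ_r, !gpowz_succ, IHw, gmulA. reflexivity.
  - rewrite Z.add_pred_r, !gpowz_pred, IHw, gmulA. reflexivity.
Qed.

Lemma gpowz_opp g z : gpowz g (- z) = ginv (gpowz g z).
Proof. apply invg_unique. rewrite <- gpowz_add, Z.add_opp_diag_r. reflexivity. Qed.

Lemma subgroup_powers g : subgroup (fun u => exists z, u = gpowz g z).
Proof.
  split; [|split].
  - exists 0%Z. reflexivity.
  - intros u v (z & ->) (w & ->). exists (z + w)%Z. rewrite gpowz_add. reflexivity.
  - intros u (z & ->). exists (- z)%Z. rewrite gpowz_opp. reflexivity.
Qed.

Lemma gpowz_mul g z w : gpowz g (z * w) = gpowz (gpowz g z) w.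
Proof.
  induction w as [|w IHw|w IHw] using Z.peano_ind.
  - rewrite Z.mul_0_r. reflexivity.
  - rewrite Z.mul_succ_r, gpowz_add, IHw, gpowz_succ. reflexivity.
  - rewrite Z.mul_pred_r, <- Z.add_opp_r, gpowz_add, gpowz_opp, IHw, gpowz_pred.
    reflexivity.
Qed.

Lemma commute_gpowz x y z : commute x y -> commute x (gpowz y z).
Proof. intro Cxy. apply gpowz_in; [apply subgroup_commute | exact Cxy]. Qed.

Lemma gpowzMn x y z : commute x y -> gpowz (x * y) z = gpowz x z * gpowz y z.
Proof.
  intro Cxy.
  induction z as [|z IHz|z IHz] using Z.peano_ind; [rewrite gmulg1; reflexivity| |].
  - rewrite !gpowz_succ, IHz. gsimpl.
    rewrite (gmulA (gpowz y z)), <- (commute_gpowz x y z Cxy). gsimpl. reflexivity.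
  - rewrite !gpowz_pred, IHz. gsimpl. f_equal.
    assert (Cx' : commute (ginv x) (gpowz y z * ginv y)).
    { rewrite <- gpowz_pred. apply commute_gpowz, commute_sym.
      apply subgroup_inv; [apply subgroup_commute | apply commute_sym, Cxy]. }
    rewrite gmulA, <- Cx'. gsimpl. reflexivity.
Qed.

Section Morphism.
Variables (K : G -> Prop) (phi : G -> G).
Hypothesis K_subgroup : subgroup K.
Hypothesis phiM : forall x y, K x -> K y -> phi (x * y) = phi x * phi y.

Lemma morph1 : phi e = e.
Proof.
  apply (mulgI (phi e)).
  rewrite <- phiM by apply (subgroup_one K_subgroup). rewrite !gmulg1. reflexivity.
Qed.

Lemma morphV x : K x -> phi (ginv x) = ginv (phi x).
Proof.
  intro Kx. apply invg_unique.
  rewrite <- phiM by (try apply subgroup_inv; assumption). rewrite gmulgV. apply morph1.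
Qed.

Lemma morph_gcomm x y : K x -> K y -> phi (gcomm x y) = gcomm (phi x) (phi y).
Proof.
  intros Kx Ky. unfold gcomm.
  assert (Kx' := subgroup_inv K_subgroup Kx). assert (Ky' := subgroup_inv K_subgroup Ky).
  rewrite !phiM, !morphV; auto; repeat apply subgroup_mul; auto.
Qed.

Lemma morph_gpowz g z : K g -> phi (gpowz g z) = gpowz (phi g) z.
Proof.
  intro Kg. assert (Kgz : forall z, K (gpowz g z)) by (intro; apply gpowz_in; assumption).
  induction z as [|z IHz|z IHz] using Z.peano_ind; [apply morph1| |].
  - rewrite !gpowz_succ, phiM, IHz; auto.
  - rewrite !gpowz_pred, phiM, IHz, morphV; auto. apply subgroup_inv; assumption.
Qed.

Hypothesis phi_inj : forall x y, K x -> K y -> phi x = phi y -> x = y.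

Lemma morph_eq1 x : K x -> phi x = e -> x = e.
Proof.
  intros Kx phix. apply phi_inj; [exact Kx | apply (subgroup_one K_subgroup)|].
  rewrite morph1. exact phix.
Qed.

Lemma morph_commute_reflect x y : K x -> K y -> commute (phi x) (phi y) -> commute x y.
Proof.
  intros Kx Ky C. apply gcomm_eq1, morph_eq1; [apply subgroup_gcomm; assumption|].
  rewrite morph_gcomm by assumption. apply gcomm_eq1, C.
Qed.

End Morphism.
End IntegerPowers.

Definition pdivides (p : option nat) (w : Z) : Prop :=
  match p with
  | Some q => (Z.of_nat q | w)%Z
  | None => w = 0%Z
  end.

Lemma valid_p_prime q : valid_p (Some q) -> prime (Z.of_nat q).
Proof.
  intros [q_ge2 q_irred]. apply prime_alt. split; [lia|].
  intros n n_range [k Ek].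
  assert (Z.to_nat n = q); [|lia].
  assert (k_pos : (0 < k)%Z) by nia.
  apply q_irred; [lia|]. exists (Z.to_nat k).
  apply Nat2Z.inj. rewrite Nat2Z.inj_mul, !Z2Nat.id by lia. lia.
Qed.

Lemma pdivides_mul_sq p z m :
  valid_p p -> pdivides p (z * (m * m)) -> pdivides p (z * m).
Proof.
  destruct p as [q|]; unfold pdivides.
  2: intros _ E; apply Z.mul_eq_0 in E as [-> | E]; [reflexivity|];
     apply Z.mul_eq_0 in E as [-> | ->]; ring.
  intros q_prime%valid_p_prime D.
  apply (prime_mult _ q_prime) in D as [D | D]; [apply Z.divide_mul_l; exact D|].
  apply (prime_mult _ q_prime) in D as [D | D]; apply Z.divide_mul_r; exact D.
Qed.

Lemma gpowz_sq_eq1 {G : groupType} (L K : G -> Prop) p x m :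
  valid_p p -> quotient_cyclic_of_order L K p -> trivial K -> L x ->
  gpowz x (m * m) = gone G -> gpowz x m = gone G.
Proof.
  intros Hp (g & (_ & g_gen) & g_order) K1 Lx x_mm.
  assert (K_one : K (gone G)).
  { apply (g_order 0%Z). destruct p; [apply Z.divide_0_r | reflexivity]. }
  destruct (g_gen x Lx) as (z & Kz). apply K1, invg_unique in Kz.
  rewrite <- gpowz_opp, Z.opp_involutive in Kz. subst x.
  rewrite <- gpowz_mul in x_mm |- *.
  apply K1, g_order, (pdivides_mul_sq p z m Hp), g_order. rewrite x_mm. exact K_one.
Qed.

Lemma subgroup_Gk {G : groupType} (H : G -> Prop) f k :
  (forall k, normal (Gk H f (S k)) (Gk H f k)) -> subgroup (Gk H f k).
Proof. intro series. destruct k; [apply subgroup_all | apply series]. Qed.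

Section CanonicalBasisOfLength4.
Variables (p : option nat) (G : groupType) (H : G -> Prop) (f : G -> G) (a : nat -> G).
Local Notation "x * y" := (gmul x y).
Local Notation e := (gone G).
Local Notation Gk := (Gk H f).
Local Notation Hk := (Hk H f).

Hypothesis p_valid : valid_p p.
Hypothesis H_subgroup : subgroup H.
Hypothesis fM : forall x y, H x -> H y -> f (x * y) = f x * f y.
Hypothesis f_inj : forall x y, H x -> H y -> f x = f y -> x = y.
Hypothesis series : forall k, normal (Hk k) (Gk k) /\ normal (Gk (S k)) (Gk k).
Hypothesis G3_cyclic :
  (exists x, Gk 3 x /\ x <> e) -> quotient_cyclic_of_order (Gk 3) (Hk 3) p.
Hypothesis basis : canonical_basis H f 4 a.

Lemma a_in_H i : 1 <= i <= 3 -> H (a i).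
Proof. intro. apply basis. simpl. lia. Qed.

Lemma f_a i : 1 <= i <= 3 -> f (a i) = a (S i).
Proof. intro. symmetry. apply basis. simpl. lia. Qed.

Lemma Gk_gen i x : i <= 3 -> Gk i x <-> gen (fun y => exists j, i < j <= 4 /\ y = a j) x.
Proof. intro. apply basis. simpl. lia. Qed.

Lemma Hk_gen i x : i <= 3 -> Hk i x <-> gen (fun y => exists j, i < j <= 3 /\ y = a j) x.
Proof. intro. apply basis. simpl. lia. Qed.

Lemma Gk_a i j : i < j <= 4 -> Gk i (a j).
Proof. intro. apply Gk_gen; [lia|]. apply gen_in. exists j. auto. Qed.

Lemma Hk_a i j : i < j <= 3 -> Hk i (a j).
Proof. intro. apply Hk_gen; [lia|]. apply gen_in. exists j. auto. Qed.

Lemma f_gpowz_a i z : 1 <= i <= 3 -> f (gpowz (a i) z) = gpowz (a (S i)) z.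
Proof. intro. rewrite (morph_gpowz H f), f_a; auto using a_in_H. Qed.

Lemma gpowz_a_eq1 i z : 1 <= i <= 3 -> gpowz (a (S i)) z = e -> gpowz (a i) z = e.
Proof.
  intros Hi E. apply (morph_eq1 H f H_subgroup fM f_inj).
  - apply gpowz_in; auto using a_in_H.
  - rewrite f_gpowz_a; assumption.
Qed.

Lemma Hk3_trivial : trivial (Hk 3).
Proof.
  intros x Hx. apply Hk_gen in Hx; [|lia]. revert x Hx.
  apply gen_min; [apply subgroup_eq1|]. intros y (j & Hj & _). lia.
Qed.

Lemma gcomm_Hk_Gk k x y :
  Hk k x -> Gk (S k) y -> Hk (S k) (gcomm x y) /\ Hk (S k) (gcomm y x).
Proof.
  intros [Hx Gx] Gy. destruct (series k) as (HkN & GkN).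
  assert (Gy' : Gk k y) by (apply GkN, Gy).
  repeat split.
  - apply (gcomm_normal_l (Hk k) (Gk k)); [|split|]; assumption.
  - apply (gcomm_normal_r (Gk (S k)) (Gk k)); assumption.
  - apply (gcomm_normal_r (Hk k) (Gk k)); [|assumption|split; assumption]. assumption.
  - apply (gcomm_normal_l (Gk (S k)) (Gk k)); assumption.
Qed.

Lemma commute_a_succ i : 1 <= i <= 3 -> commute (a i) (a (S i)).
Proof.
  assert (c34 : commute (a 3) (a 4)).
  { apply gcomm_eq1, Hk3_trivial, (gcomm_Hk_Gk 2 (a 3) (a 4)); [apply Hk_a | apply Gk_a]; lia. }
  assert (pullback : forall i, 1 <= i <= 2 ->
            commute (a (S i)) (a (S (S i))) -> commute (a i) (a (S i))).
  { intros j Hj C. apply (morph_commute_reflect H f H_subgroup fM f_inj);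
      [apply a_in_H; lia | apply a_in_H; lia|].
    rewrite !f_a by lia. exact C. }
  intro Hi. assert (i = 1 \/ i = 2 \/ i = 3) as [-> | [-> | ->]] by lia;
    repeat (apply pullback; [lia|]); exact c34.
Qed.

Lemma abelian_H1 : abelian (Hk 1).
Proof.
  intros x y Hx Hy. apply Hk_gen in Hx, Hy; try lia.
  eapply abelian_gen; [|exact Hx | exact Hy].
  intros u v (i & Hi & ->) (j & Hj & ->).
  assert (i = 2 \/ i = 3) as [-> | ->] by lia; assert (j = 2 \/ j = 3) as [-> | ->] by lia;
    try reflexivity; [|apply commute_sym]; apply commute_a_succ; lia.
Qed.

Lemma a3_central_G1 u : Gk 1 u -> commute (a 3) u.
Proof.
  intro Gu. apply Gk_gen in Gu; [|lia]. eapply gen_commute; [|exact Gu].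
  intros s (j & Hj & ->).
  assert (j = 2 \/ j = 3 \/ j = 4) as [-> | [-> | ->]] by lia; try reflexivity;
    [apply commute_sym|]; apply commute_a_succ; lia.
Qed.

Lemma gcomm_a2_a4_power : exists m, gcomm (a 2) (a 4) = gpowz (a 3) m.
Proof.
  assert (y_H2 : Hk 2 (gcomm (a 2) (a 4))).
  { apply (gcomm_Hk_Gk 1 (a 2) (a 4)); [apply Hk_a | apply Gk_a]; lia. }
  apply Hk_gen in y_H2; [|lia].
  refine (gen_min _ _ (subgroup_powers (a 3)) _ _ y_H2). intros y (j & Hj & ->).
  replace j with 3 by lia. exists 1%Z. rewrite gpowz1. reflexivity.
Qed.

Lemma gcomm_a1_a3_power m :
  gcomm (a 2) (a 4) = gpowz (a 3) m -> gcomm (a 1) (a 3) = gpowz (a 2) m.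
Proof.
  intro y_eq. apply f_inj.
  - apply subgroup_gcomm; auto using a_in_H.
  - apply gpowz_in; auto using a_in_H.
  - rewrite (morph_gcomm H f), f_gpowz_a, !f_a; auto using a_in_H.
Qed.

(* Conjugation by a1 turns the commuting pair (a3, a4) into (a3 [a1,a3]^-1, a4 [a4,a1]). *)
Lemma commute_gcomm_a1_a3_a4 : commute (gcomm (a 1) (a 3)) (a 4).
Proof.
  set (x := gcomm (a 1) (a 3)). set (h := gcomm (a 4) (a 1)).
  assert (x_H1 : Hk 1 x) by (apply (gcomm_Hk_Gk 0 (a 1) (a 3)); [apply Hk_a | apply Gk_a]; lia).
  assert (h_H1 : Hk 1 h) by (apply (gcomm_Hk_Gk 0 (a 1) (a 4)); [apply Hk_a | apply Gk_a]; lia).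
  assert (G1 := subgroup_Gk H f 1 (fun k => proj2 (series k))).
  assert (a4h_G1 : Gk 1 (a 4 * h)) by (apply subgroup_mul; auto; [apply Gk_a; lia | apply h_H1]).
  assert (conj_a1 : commute (a 3 * ginv x) (a 4 * h)).
  { unfold x, h. rewrite invg_gcomm, <- !gconj_gcomm.
    apply commute_gconj, commute_a_succ. lia. }
  assert (x_a4h : commute (a 4 * h) x).
  { rewrite <- (invgK x). apply subgroup_inv; [apply subgroup_commute|].
    replace (ginv x) with (ginv (a 3) * (a 3 * ginv x)) by (gsimpl; reflexivity).
    apply subgroup_mul; [apply subgroup_commute | | apply commute_sym; exact conj_a1].
    apply subgroup_inv; [apply subgroup_commute|]. apply commute_sym, a3_central_G1, a4h_G1. }
  replace (a 4) with (a 4 * h * ginv h) by (gsimpl; reflexivity).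
  apply subgroup_mul; [apply subgroup_commute | apply commute_sym, x_a4h|].
  apply subgroup_inv; [apply subgroup_commute|]. apply abelian_H1; assumption.
Qed.

(* Conjugation by a4 sends a2^m = [a1,a3] to (a2 [a2,a4])^m = a2^m a3^(m^2), yet fixes [a1,a3]. *)
Lemma gpowz_a3_sq_eq1 m : gcomm (a 2) (a 4) = gpowz (a 3) m -> gpowz (a 3) (m * m) = e.
Proof.
  intro y_eq. pose proof (gcomm_a1_a3_power m y_eq) as x_eq.
  assert (c2y : commute (a 2) (gcomm (a 2) (a 4))).
  { rewrite y_eq. apply commute_gpowz, commute_a_succ. lia. }
  assert (conj_x : gconj (gpowz (a 2) m) (a 4) = gpowz (a 2) m * gpowz (a 3) (m * m)).
  { rewrite (morph_gpowz (fun _ => True) (fun u => gconj u (a 4)) subgroup_all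
              (fun u v _ _ => gconjM u v (a 4)) (a 2) m I).
    rewrite gconj_gcomm, gpowzMn, y_eq, <- gpowz_mul by exact c2y. reflexivity. }
  rewrite gconj_id in conj_x by (rewrite <- x_eq; apply commute_gcomm_a1_a3_a4).
  symmetry. apply (mulgI (gpowz (a 2) m)). rewrite <- conj_x, gmulg1. reflexivity.
Qed.

Lemma gpowz_a4_sq_eq1 m : gpowz (a 4) (m * m) = e -> gpowz (a 4) m = e.
Proof.
  destruct (classic (a 4 = e)) as [a4_1 | a4_neq1].
  - intros _. rewrite a4_1. apply gpowz1n.
  - apply (gpowz_sq_eq1 (Gk 3) (Hk 3) p); auto using Hk3_trivial.
    + apply G3_cyclic. exists (a 4). split; [apply Gk_a; lia | exact a4_neq1].
    + apply Gk_a. lia.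
Qed.

Lemma commute_a1_a3_a2_a4 : commute (a 1) (a 3) /\ commute (a 2) (a 4).
Proof.
  destruct gcomm_a2_a4_power as (m & y_eq).
  assert (a4_m : gpowz (a 4) m = e).
  { apply gpowz_a4_sq_eq1. rewrite <- f_gpowz_a, gpowz_a3_sq_eq1 by (assumption || lia).
    apply (morph1 H f); assumption. }
  assert (a3_m := gpowz_a_eq1 3 m ltac:(lia) a4_m).
  assert (a2_m := gpowz_a_eq1 2 m ltac:(lia) a3_m).
  split; apply gcomm_eq1; [rewrite (gcomm_a1_a3_power m y_eq) | rewrite y_eq]; assumption.
Qed.

Lemma commute_a i j : 1 <= i <= 4 -> 1 <= j <= 4 ->
  ~ (i = 1 /\ j = 4) -> ~ (i = 4 /\ j = 1) -> commute (a i) (a j).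
Proof.
  intros Hi Hj not14 not41. destruct commute_a1_a3_a2_a4 as (c13 & c24).
  assert (c12 := commute_a_succ 1 ltac:(lia)).
  assert (c23 := commute_a_succ 2 ltac:(lia)).
  assert (c34 := commute_a_succ 3 ltac:(lia)).
  assert (i = 1 \/ i = 2 \/ i = 3 \/ i = 4) as [-> | [-> | [-> | ->]]] by lia;
  assert (j = 1 \/ j = 2 \/ j = 3 \/ j = 4) as [-> | [-> | [-> | ->]]] by lia;
  first [reflexivity | assumption | apply commute_sym; assumption | lia].
Qed.

Lemma abelian_of_commute_a1_a4 : commute (a 1) (a 4) -> abelian (fun _ : G => True).
Proof.
  intros c14 x y _ _.
  apply (abelian_gen (fun y => exists j, 0 < j <= 4 /\ y = a j)); try (apply Gk_gen; [lia | exact I]).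
  intros u v (i & Hi & ->) (j & Hj & ->).
  assert (i = 1 /\ j = 4 \/ i = 4 /\ j = 1 \/ ~ (i = 1 /\ j = 4) /\ ~ (i = 4 /\ j = 1))
    as [[-> ->] | [[-> ->] | [not14 not41]]] by lia.
  - exact c14.
  - apply commute_sym, c14.
  - apply commute_a; assumption || lia.
Qed.

Lemma not_cutoff_2 : ~ cutoff 4 a 2.
Proof.
  intros (_ & _ & maximal). apply (maximal 3); [lia|].
  intros j Hj. apply gcomm_eq1, commute_a; lia.
Qed.

Lemma abelian_a1_a2_a3 : abelian (gen (fun y => y = a 1 \/ y = a 2 \/ y = a 3)).
Proof.
  apply abelian_gen. intros u v [-> | [-> | ->]] [-> | [-> | ->]]; apply commute_a; lia.
Qed.

Lemma cutoff_3 : ~ abelian (fun _ : G => True) -> cutoff 4 a 3.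
Proof.
  intro nonabelian. split; [lia | split].
  - intros j Hj. apply gcomm_eq1, commute_a; lia.
  - intros s Hs all_commute. apply nonabelian, abelian_of_commute_a1_a4, gcomm_eq1, all_commute.
    lia.
Qed.

End CanonicalBasisOfLength4.

Theorem mainTheorem9 :
  forall (p : option nat) (G : groupType) (H : G -> Prop) (f : G -> G)
         (a : nat -> G),
    valid_p p ->
    SSP H f p ->
    ssp_length G p 4 ->
    canonical_basis H f 4 a ->
    (* no SSP group of G(4,2)-type *)
    ~ cutoff 4 a 2 /\
    (* non-abelian case: <a1,a2,a3> abelian and cut-off point 3 *)
    (~ abelian (fun _ : G => True) ->
       abelian (gen (fun y => y = a 1 \/ y = a 2 \/ y = a 3)) /\ cutoff 4 a 3).
Proof.
  intros p G H f a p_valid (_ & H_subgroup & fM & f_inj & _ & series & factors) _ basis.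
  assert (normal_series : forall k, normal (Hk H f k) (Gk H f k) /\ normal (Gk H f (S k)) (Gk H f k))
    by (intro k; destruct (series k) as (HkN & GkN & _); split; assumption).
  specialize (factors 3).
  split; [| intro nonabelian; split].
  - eapply not_cutoff_2; eassumption.
  - eapply abelian_a1_a2_a3; eassumption.
  - eapply cutoff_3; eassumption.
Qed.
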